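(* If $f$ is $L$-smooth, then Muon with exact polar decomposition satisfies, for every $K\ge1$, $$\eta\sum_{k=0}^{K-1}\mathbb E\|\nabla f({\bm{X}}_k)\|_F\le f({\bm{X}}_0)-f_\star+\frac{Ld_0}{2}K\eta^2+\eta(1+\sqrt{d_0})\sum_{k=0}^{K-1}\mathbb E\|{\bm{S}}_k\|_F.$$
   Context: Norms on $\mathbb{R}^{m\times n}$: $\|\cdot\|_F$ Frobenius, $\|\cdot\|_{\mathrm{op}}$ spectral, $\|\cdot\|_*$ nuclear; $d_0:=\min\{m,n\}$. $f:\mathbb{R}^{m\times n}\to\mathbb R$ is differentiable with $f\ge f_\star>-\infty$; $L$-smooth means $\|\nabla f({\bm{X}})-\nabla f({\bm{Y}})\|_F\le L\|{\bm{X}}-{\bm{Y}}\|_F$ for all ${\bm{X}},{\bm{Y}}$. Muon: given $\beta\in(0,1)$, $\eta>0$, $B\in\mathbb N$, initial ${\bm{X}}_0,{\bm{C}}_{-1}$, for $k=0,1,\dots$: ${\bm{G}}_k=\frac1B\sum_{i=1}^B{\bm{G}}_k^i$ (stochastic gradient estimates), ${\bm{C}}_k=\beta{\bm{C}}_{k-1}+{\bm{G}}_k$, ${\bm{M}}_k=\beta{\bm{C}}_k+{\bm{G}}_k$, ${\bm{X}}_{k+1}={\bm{X}}_k-\eta\mathcal T({\bm{M}}_k)$, where with exact polar decomposition $\mathcal T({\bm{M}})={\bm{U}}{\bm{V}}^\top$ for a compact SVD ${\bm{M}}={\bm{U}}\bm\Sigma{\bm{V}}^\top$ ($\mathcal T(\mathbf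 0)=\mathbf 0$). $\widetilde{{\bm{M}}}_k:=(1-\beta){\bm{M}}_k$, ${\bm{S}}_k:=\widetilde{{\bm{M}}}_k-\nabla f({\bm{X}}_k)$. All expectations are assumed finite. *)

From HB Require Import structures.
From mathcomp Require Import all_boot all_order all_algebra.
From mathcomp Require Import all_classical all_reals all_analysis.
Set Implicit Arguments. Unset Strict Implicit. Unset Printing Implicit Defensive.
Import Order.TTheory GRing.Theory Num.Theory.
Import numFieldNormedType.Exports.
Local Open Scope ring_scope.

Section Defs.
Context {R : realType} {m n : nat}.

Definition frob_inner (A B : 'M[R]_(m, n)) : R :=
  \sum_(i < m) \sum_(j < n) A i j * B i j.

Definition frob (A : 'M[R]_(m, n)) : R := Num.sqrt (frob_inner A A).

Definition is_compact_svd (M : 'M[R]_(m, n)) (r : nat)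
  (U : 'M[R]_(m, r)) (s : 'rV[R]_r) (V : 'M[R]_(n, r)) : Prop :=
  [/\ U^T *m U = 1%:M, V^T *m V = 1%:M, (forall i, 0 < s 0 i)
    & M = U *m diag_mx s *m V^T].

(* P = T(M) = U V^T for a compact SVD of M (exact polar factor);
   for M = 0 the compact SVD has r = 0, giving P = 0. *)
Definition is_polar_factor (M P : 'M[R]_(m, n)) : Prop :=
  exists (r : nat) (U : 'M[R]_(m, r)) (s : 'rV[R]_r) (V : 'M[R]_(n, r)),
    is_compact_svd M U s V /\ P = U *m V^T.

Definition has_gradient (f : 'M[R]_(m, n) -> R) (gradf : 'M[R]_(m, n) -> 'M[R]_(m, n)) : Prop :=
  forall X, differentiable f X /\ forall H, 'd f X H = frob_inner (gradf X) H.

Definition L_smooth (gradf : 'M[R]_(m, n) -> 'M[R]_(m, n)) (L : R) : Prop :=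
  forall X Y, frob (gradf X - gradf Y) <= L * frob (X - Y).

Fixpoint muonC {T : Type} (beta : R) (Cm1 : 'M[R]_(m, n))
  (Gb : nat -> T -> 'M[R]_(m, n)) (k : nat) (w : T) : 'M[R]_(m, n) :=
  match k with
  | 0 => beta *: Cm1 + Gb 0%N w
  | k'.+1 => beta *: muonC beta Cm1 Gb k' w + Gb k w
  end.

Definition muonM {T : Type} (beta : R) (Cm1 : 'M[R]_(m, n))
  (Gb : nat -> T -> 'M[R]_(m, n)) (k : nat) (w : T) : 'M[R]_(m, n) :=
  beta *: muonC beta Cm1 Gb k w + Gb k w.

Definition minibatch {T : Type} (B : nat) (G : nat -> 'I_B -> T -> 'M[R]_(m, n))
  (k : nat) (w : T) : 'M[R]_(m, n) :=
  (B%:R)^-1 *: \sum_(i < B) G k i w.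

End Defs.

From HB Require Import structures.
From mathcomp Require Import all_boot all_order all_algebra.
From mathcomp Require Import all_classical all_reals all_analysis.
From mathcomp Require Import ring lra.
Import Order.TTheory GRing.Theory Num.Theory.
Import numFieldNormedType.Exports.
Local Open Scope ring_scope.
Set Implicit Arguments. Unset Strict Implicit. Unset Printing Implicit Defensive.

(* By the descent lemma for L-smooth f, the step -eta T(M) decreases f by
   eta <grad f(X), T(M)> up to (L/2) eta^2 ||T(M)||_F^2, and ||T(M)||_F^2 = rank M <= d0.
   For a compact SVD M = U diag(s) V^T one has <M, T(M)> = sum s >= ||M||_F, so with
   grad f(X) = (1 - beta) M - S and Cauchy-Schwarz,
   <grad f(X), T(M)> >= ||grad f(X)||_F - (1 + sqrt d0) ||S||_F.
   Summing this one-step inequality telescopes to f(X_0) - f(X_K) <= f(X_0) - f_*,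
   and taking expectations preserves it. *)

Section FrobeniusInner.
Context {R : realType} {m n : nat}.
Implicit Types A B C : 'M[R]_(m, n).

Lemma frob_innerC A B : frob_inner A B = frob_inner B A.
Proof. by apply: eq_bigr => i _; apply: eq_bigr => j _; rewrite mulrC. Qed.

Lemma frob_innerDl A B C : frob_inner (A + B) C = frob_inner A C + frob_inner B C.
Proof.
rewrite /frob_inner -big_split; apply: eq_bigr => i _.
by rewrite -big_split; apply: eq_bigr => j _; rewrite mxE mulrDl.
Qed.

Lemma frob_innerZl a A B : frob_inner (a *: A) B = a * frob_inner A B.
Proof.
rewrite /frob_inner mulr_sumr; apply: eq_bigr => i _.
by rewrite mulr_sumr; apply: eq_bigr => j _; rewrite mxE mulrA.
Qed.

Lemma frob_innerNl A B : frob_inner (- A) B = - frob_inner A B.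
Proof. by rewrite -scaleN1r frob_innerZl mulN1r. Qed.

Lemma frob_innerBl A B C : frob_inner (A - B) C = frob_inner A C - frob_inner B C.
Proof. by rewrite frob_innerDl frob_innerNl. Qed.

Lemma frob_innerDr A B C : frob_inner C (A + B) = frob_inner C A + frob_inner C B.
Proof. by rewrite frob_innerC frob_innerDl !(frob_innerC C). Qed.

Lemma frob_innerZr a A B : frob_inner B (a *: A) = a * frob_inner B A.
Proof. by rewrite frob_innerC frob_innerZl frob_innerC. Qed.

Lemma frob_innerNr A B : frob_inner B (- A) = - frob_inner B A.
Proof. by rewrite frob_innerC frob_innerNl frob_innerC. Qed.

Lemma frob_innerBr A B C : frob_inner C (A - B) = frob_inner C A - frob_inner C B.
Proof. by rewrite frob_innerDr frob_innerNr. Qed.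

Lemma frob_inner0l B : frob_inner 0 B = 0.
Proof. by rewrite -(scale0r 0) frob_innerZl mul0r. Qed.

Lemma frob_inner0r B : frob_inner B 0 = 0.
Proof. by rewrite frob_innerC frob_inner0l. Qed.

Lemma frob_innerxx_ge0 A : 0 <= frob_inner A A.
Proof. by apply: sumr_ge0 => i _; apply: sumr_ge0 => j _; rewrite -expr2 sqr_ge0. Qed.

Lemma frob_innerxx_eq0 A : (frob_inner A A == 0) = (A == 0).
Proof.
apply/idP/eqP => [|->]; last by rewrite frob_inner0l.
rewrite psumr_eq0 => [/allP A0|i _]; last first.
  by apply: sumr_ge0 => j _; rewrite -expr2 sqr_ge0.
apply/matrixP => i j; rewrite mxE; apply/eqP.
move: (A0 i (mem_index_enum _)); rewrite /= psumr_eq0 => [/allP|k _].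
  by move/(_ j (mem_index_enum _)); rewrite /= mulf_eq0 orbb.
by rewrite -expr2 sqr_ge0.
Qed.

Lemma frob_ge0 A : 0 <= frob A.
Proof. exact: sqrtr_ge0. Qed.

Lemma frob_sqr A : frob A ^+ 2 = frob_inner A A.
Proof. by rewrite sqr_sqrtr // frob_innerxx_ge0. Qed.

Lemma frob_eq0 A : (frob A == 0) = (A == 0).
Proof. by rewrite -sqrf_eq0 frob_sqr frob_innerxx_eq0. Qed.

Lemma frobZ a A : frob (a *: A) = `|a| * frob A.
Proof.
by rewrite /frob frob_innerZl frob_innerZr mulrA -expr2 sqrtrM ?sqr_ge0 // sqrtr_sqr.
Qed.

Lemma frobN A : frob (- A) = frob A.
Proof. by rewrite -scaleN1r frobZ normrN normr1 mul1r. Qed.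

Lemma frob_inner_CauchySchwarz A B : frob_inner A B <= frob A * frob B.
Proof.
have [->|A0] := eqVneq A 0; first by rewrite frob_inner0l mulr_ge0 ?frob_ge0.
have [->|B0] := eqVneq B 0; first by rewrite frob_inner0r mulr_ge0 ?frob_ge0.
have a_gt0 : 0 < frob A by rewrite lt_def frob_eq0 A0 frob_ge0.
have b_gt0 : 0 < frob B by rewrite lt_def frob_eq0 B0 frob_ge0.
(* expand 0 <= ||b A - a B||^2 with a = ||A||, b = ||B|| *)
have := frob_innerxx_ge0 (frob B *: A - frob A *: B).
rewrite frob_innerBl !frob_innerBr !frob_innerZl !frob_innerZr -!frob_sqr.
rewrite (frob_innerC B A) => H.
suff : 0 <= 2 * frob A * frob B * (frob A * frob B - frob_inner A B).
  by rewrite pmulr_rge0 ?subr_ge0 // !mulr_gt0.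
by move: H; set x := frob_inner A B; set a := frob A; set b := frob B; nra.
Qed.

Lemma ler_frobD A B : frob (A + B) <= frob A + frob B.
Proof.
rewrite -(@ler_pXn2r _ 2) ?nnegrE ?addr_ge0 ?frob_ge0 //.
rewrite frob_sqr frob_innerDl !frob_innerDr (frob_innerC B A) sqrrD -!frob_sqr.
have := frob_inner_CauchySchwarz A B; lra.
Qed.

Lemma frob_inner_trace A B : frob_inner A B = \tr (A^T *m B).
Proof.
rewrite /frob_inner /mxtrace exchange_big /=; apply: eq_bigr => j _.
by rewrite !mxE; apply: eq_bigr => i _; rewrite mxE.
Qed.

End FrobeniusInner.

Section PolarFactor.
Context {R : realType} {m n : nat}.

Section CompactSVD.
Variables (M : 'M[R]_(m, n)) (r : nat).
Variables (U : 'M[R]_(m, r)) (s : 'rV[R]_r) (V : 'M[R]_(n, r)).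
Hypothesis svdM : is_compact_svd M U s V.

Lemma compact_svd_rank : (r <= minn m n)%N.
Proof.
case: svdM => UU VV _ _; rewrite leq_min; apply/andP; split.
  have := mxrankM_maxr U^T U; rewrite UU mxrank1 => /leq_trans; apply.
  exact: rank_leq_row.
have := mxrankM_maxr V^T V; rewrite VV mxrank1 => /leq_trans; apply.
exact: rank_leq_row.
Qed.

Lemma compact_svd_polar_sqr : frob_inner (U *m V^T) (U *m V^T) = r%:R.
Proof.
case: svdM => UU VV _ _.
rewrite frob_inner_trace trmx_mul trmxK !mulmxA -(mulmxA V) UU mulmx1.
by rewrite mxtrace_mulC VV mxtrace1.
Qed.

Lemma compact_svd_polar_inner : frob_inner M (U *m V^T) = \sum_i s 0 i.
Proof.
case: svdM => UU VV _ ->.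
rewrite frob_inner_trace !trmx_mul !trmxK tr_diag_mx !mulmxA.
rewrite -(mulmxA (V *m diag_mx s)) UU mulmx1.
by rewrite mxtrace_mulC mulmxA VV mul1mx mxtrace_diag.
Qed.

Lemma compact_svd_frob_sqr : frob_inner M M = \sum_i s 0 i ^+ 2.
Proof.
case: svdM => UU VV _ ->.
rewrite frob_inner_trace !trmx_mul !trmxK tr_diag_mx !mulmxA.
rewrite -(mulmxA (V *m diag_mx s)) UU mulmx1.
rewrite mxtrace_mulC !mulmxA VV mul1mx mulmx_diag mxtrace_diag.
by apply: eq_bigr => i _; rewrite mxE expr2.
Qed.

End CompactSVD.

Lemma sum_sqr_le_sqr_sum (I : finType) (x : I -> R) : (forall i, 0 <= x i) ->
  \sum_i x i ^+ 2 <= (\sum_i x i) ^+ 2.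
Proof.
move=> x_ge0; rewrite expr2 mulr_suml; apply: ler_sum => i _.
rewrite mulr_sumr (bigD1 i) //= expr2 lerDl.
by apply: sumr_ge0 => j _; apply: mulr_ge0.
Qed.

Lemma polar_factor_frob_le_inner (M P : 'M[R]_(m, n)) :
  is_polar_factor M P -> frob M <= frob_inner M P.
Proof.
move=> [r [U [s [V [svdM ->]]]]]; have [_ _ s_gt0 _] := svdM.
have sum_ge0 : 0 <= \sum_i s 0 i by apply: sumr_ge0 => i _; apply: ltW.
rewrite (compact_svd_polar_inner svdM) /frob (compact_svd_frob_sqr svdM).
rewrite -(ger0_norm sum_ge0) -sqrtr_sqr ler_sqrt ?sqr_ge0 //.
by apply: sum_sqr_le_sqr_sum => i; apply: ltW.
Qed.

Lemma polar_factor_sqr (M P : 'M[R]_(m, n)) : is_polar_factor M P ->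
  exists2 r : nat, frob_inner P P = r%:R & (r <= minn m n)%N.
Proof.
move=> [r [U [s [V [svdM ->]]]]].
by exists r; [exact: compact_svd_polar_sqr svdM | exact: compact_svd_rank svdM].
Qed.

Lemma polar_factor_frob_le (M P : 'M[R]_(m, n)) :
  is_polar_factor M P -> frob P <= Num.sqrt (minn m n)%:R.
Proof. by case/polar_factor_sqr => r PP rle; rewrite /frob PP ler_sqrt ?ler_nat. Qed.

Lemma polar_factor_alignment (M P g : 'M[R]_(m, n)) (c : R) : 0 < c ->
  is_polar_factor M P ->
  frob g - (1 + Num.sqrt (minn m n)%:R) * frob (c *: M - g) <= frob_inner g P.
Proof.
move=> c_gt0 polMP; set S := c *: M - g.
have gE : g = c *: M - S by rewrite /S opprB addrC subrK.
have tri := ler_frobD (c *: M) (- S).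
rewrite frobN frobZ (gtr0_norm c_gt0) -gE in tri.
have MP : c * frob M <= c * frob_inner M P.
  by apply: ler_wpM2l; [exact: ltW | exact: polar_factor_frob_le_inner].
have SP : frob S * frob P <= frob S * Num.sqrt (minn m n)%:R.
  by apply: ler_wpM2l; [exact: frob_ge0 | exact: polar_factor_frob_le polMP].
have gP : frob_inner g P = c * frob_inner M P - frob_inner S P.
  by rewrite {1}gE frob_innerBl frob_innerZl.
have := frob_inner_CauchySchwarz S P; lra.
Qed.

End PolarFactor.

Lemma is_derive_quadratic (R : realType) (a k t : R) :
  is_derive t 1 (fun t : R => t * a + t ^+ 2 * k) (a + 2 * t * k).
Proof.
have -> : (fun t : R => t * a + t ^+ 2 * k) = id * cst a + id ^+ 2 * cst k.
  by apply/funext => x; rewrite !fctE.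
apply: is_derive_eq; rewrite /= !scaler0 !add0r /GRing.scale /= !mulr1 expr1.
ring.
Qed.

Section SmoothDescent.
Context {R : realType} {m n : nat}.
Variables (f : 'M[R]_(m, n) -> R) (gradf : 'M[R]_(m, n) -> 'M[R]_(m, n)) (L : R).
Hypotheses (gradf_f : has_gradient f gradf) (smooth_f : L_smooth gradf L).

Lemma is_derive_along_line (X D : 'M[R]_(m, n)) (t : R) :
  is_derive t 1 (fun t : R => f (X + t *: D)) (frob_inner (gradf (X + t *: D)) D).
Proof.
have [df dfE] := gradf_f (X + t *: D).
have shiftE : (fun h : R => h^-1 *: (((fun t : R => f (X + t *: D)) \o shift t) (h *: 1)
                 - f (X + t *: D)))
            = (fun h : R => h^-1 *: ((f \o shift (X + t *: D)) (h *: D) - f (X + t *: D))).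
  apply/funext => h /=; congr (_ *: (f _ - _)).
  by rewrite /shift /= [h%:A]mulr1 scalerDl addrCA.
apply: DeriveDef.
  by have := @diff_derivable _ _ _ _ _ D df; rewrite /derivable shiftE.
by rewrite /derive shiftE -/(derive f (X + t *: D) D) deriveE.
Qed.

Lemma descent_lemma (X D : 'M[R]_(m, n)) :
  f (X + D) <= f X + frob_inner (gradf X) D + L / 2 * frob_inner D D.
Proof.
set a := frob_inner (gradf X) D; set k := L / 2 * frob_inner D D.
(* h is nonincreasing on [0, 1] because grad f is L-Lipschitz *)
pose h : R -> R := (fun t : R => f (X + t *: D)) - (fun t : R => t * a + t ^+ 2 * k).
have h_der (t : R) : is_derive t (1 : R) h (frob_inner (gradf (X + t *: D)) D - (a + 2 * t * k)).
  exact: is_deriveB (is_derive_along_line X D t) (is_derive_quadratic a k t).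
have h_derivable (t : R) : derivable h t 1 by case: (h_der t).
have h'_le0 t : t \in `]0, 1[ -> derive1 h t <= 0.
  rewrite in_itv /= => /andP[t_gt0 _]; rewrite derive1E; case: (h_der t) => _ ->.
  suff : frob_inner (gradf (X + t *: D) - gradf X) D <= 2 * t * k.
    by rewrite frob_innerBl -/a; lra.
  apply: (le_trans (frob_inner_CauchySchwarz _ _)).
  apply: (le_trans (ler_wpM2r (frob_ge0 D) (smooth_f _ _))).
  rewrite addrAC subrr add0r frobZ (ger0_norm (ltW t_gt0)) /k -frob_sqr.
  by rewrite [leRHS](_ : _ = L * (t * frob D) * frob D) //; field.
have h_cont := @derivable_within_continuous R R^o h `[0, 1] (fun t _ => h_derivable t).
have : h 1 <= h 0.
  apply: (ler0_derive1_le_cc (fun t _ => h_derivable t) h'_le0 h_cont);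
  by rewrite ?in_itv /= ?ler01 ?lexx.
rewrite /h !fctE /= scale0r addr0 scale1r mul0r expr0n /= mul0r addr0 subr0.
by rewrite mul1r expr1n mul1r; lra.
Qed.

Lemma L_smooth_ge0 : (0 < minn m n)%N -> 0 <= L.
Proof.
rewrite leq_min => /andP[m_gt0 n_gt0].
have E_neq0 : const_mx 1 != 0 :> 'M[R]_(m, n).
  by apply/eqP => /matrixP /(_ (Ordinal m_gt0) (Ordinal n_gt0)) /eqP; rewrite !mxE oner_eq0.
have := le_trans (frob_ge0 _) (smooth_f (const_mx 1) 0).
by rewrite subr0 pmulr_lge0 // lt_def frob_eq0 E_neq0 frob_ge0.
Qed.

Lemma polar_step_descent (X M P : 'M[R]_(m, n)) (c eta : R) :
  0 < c -> 0 <= eta -> is_polar_factor M P ->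
  f (X - eta *: P) <= f X - eta * frob (gradf X)
    + eta * (1 + Num.sqrt (minn m n)%:R) * frob (c *: M - gradf X)
    + L * (minn m n)%:R / 2 * eta ^+ 2.
Proof.
move=> c_gt0 eta_ge0 polMP; set d0 := minn m n.
have [r PP r_le] := polar_factor_sqr polMP.
have LPP : L * r%:R <= L * d0%:R.
  have [d0_eq0|d0_gt0] := posnP d0.
    by move: r_le; rewrite -/d0 d0_eq0 leqn0 => /eqP ->.
  by rewrite ler_wpM2l ?ler_nat ?L_smooth_ge0.
have align := ler_wpM2l eta_ge0 (polar_factor_alignment (gradf X) c_gt0 polMP).
have := descent_lemma X (- (eta *: P)).
rewrite frob_innerNl !frob_innerNr opprK !frob_innerZl !frob_innerZr PP.
have : 0 <= eta ^+ 2 by rewrite sqr_ge0.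
move: LPP align; rewrite -/d0; nra.
Qed.

End SmoothDescent.

Lemma sum_descent_telescope (R : realFieldType) (F a b : nat -> R) (eta c q : R) (K : nat) :
  (forall k, F k.+1 <= F k - eta * a k + c * b k + q) ->
  eta * \sum_(k < K) a k <= F 0%N - F K + K%:R * q + c * \sum_(k < K) b k.
Proof.
move=> step; elim: K => [|K IH]; first by rewrite !big_ord0 !mulr0 subrr mul0r !addr0.
rewrite !big_ord_recr /= -addn1 natrD !mulrDr mulrDl mul1r addn1.
by have := step K; lra.
Qed.

Section Expectation.
Context {R : realType} {d : measure_display} {T : measurableType d}.
Variable P : probability T R.
Local Open Scope ereal_scope.

Lemma integrable_scaled_sum (K : nat) (c : R) (a : nat -> T -> R) :
  (forall k, P.-integrable setT (fun w => (a k w)%:E)) ->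
  P.-integrable setT (fun w => c%:E * \sum_(k < K) (a k w)%:E).
Proof.
move=> ia; apply: (integrableZl measurableT).
by apply: (integrable_sum measurableT) => k _; exact: ia.
Qed.

Lemma integral_scaled_sum (K : nat) (c : R) (a : nat -> T -> R) :
  (forall k, P.-integrable setT (fun w => (a k w)%:E)) ->
  \int[P]_w (c%:E * \sum_(k < K) (a k w)%:E)
  = c%:E * \sum_(k < K) \int[P]_w (a k w)%:E.
Proof.
move=> ia; rewrite integralZl //; last first.
  by apply: (integrable_sum measurableT) => k _; exact: ia.
by rewrite (integral_sum measurableT (f := fun (k : 'I_K) w => (a k w)%:E)).
Qed.

Lemma expectation_sum_le (K : nat) (e C c : R) (a b : nat -> T -> R) :
  (forall k, P.-integrable setT (fun w => (a k w)%:E)) ->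
  (forall k, P.-integrable setT (fun w => (b k w)%:E)) ->
  (forall w, (e * \sum_(k < K) a k w <= C + c * \sum_(k < K) b k w)%R) ->
  e%:E * \sum_(k < K) \int[P]_w (a k w)%:E
  <= C%:E + c%:E * \sum_(k < K) \int[P]_w (b k w)%:E.
Proof.
move=> ia ib ptwise.
rewrite -!integral_scaled_sum // -[C%:E]mule1 -(probability_setT P).
rewrite -(integral_cst P measurableT) -integralD //; last first.
- exact: integrable_scaled_sum.
- exact: finite_measure_integrable_cst.
apply: le_integral => //.
- exact: integrable_scaled_sum.
- apply: integrableD => //; last exact: integrable_scaled_sum.
  exact: finite_measure_integrable_cst.
by move=> w _; rewrite !sumEFin -!EFinM -EFinD lee_fin ptwise.
Qed.

End Expectation.

Theorem mainTheorem11
  (R : realType) (m n : nat)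
  (f : 'M[R]_(m, n) -> R) (gradf : 'M[R]_(m, n) -> 'M[R]_(m, n))
  (fstar L beta eta : R) (B K : nat)
  (d : measure_display) (T : measurableType d) (P : probability T R)
  (G : nat -> 'I_B -> T -> 'M[R]_(m, n))
  (X0 Cm1 : 'M[R]_(m, n))
  (X : nat -> T -> 'M[R]_(m, n)) (Pol : nat -> T -> 'M[R]_(m, n)) :
  has_gradient f gradf ->
  (forall Y, fstar <= f Y) ->
  L_smooth gradf L ->
  0 < beta < 1 -> 0 < eta -> (0 < B)%N ->
  (* Muon iterates with exact polar decomposition *)
  (forall w, X 0%N w = X0) ->
  (forall k w, is_polar_factor (muonM beta Cm1 (minibatch G) k w) (Pol k w)) ->
  (forall k w, X k.+1 w = X k w - eta *: Pol k w) ->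
  (* all expectations are finite *)
  (forall k, P.-integrable setT (fun w => (frob (gradf (X k w)))%:E)) ->
  (forall k, P.-integrable setT (fun w =>
     (frob ((1 - beta) *: muonM beta Cm1 (minibatch G) k w - gradf (X k w)))%:E)) ->
  (1 <= K)%N ->
  (eta%:E * \sum_(k < K) \int[P]_w (frob (gradf (X k w)))%:E
   <= (f X0 - fstar + L * (minn m n)%:R / 2 * K%:R * eta ^+ 2)%:E
      + (eta * (1 + Num.sqrt (minn m n)%:R))%:E
        * \sum_(k < K) \int[P]_w
            (frob ((1 - beta) *: muonM beta Cm1 (minibatch G) k w - gradf (X k w)))%:E)%E.
Proof.
move=> gradf_f f_ge smooth_f /andP[_ beta_lt1] eta_gt0 _ X_0 polar X_S int_grad int_S _.
set d0 := minn m n; set q := L * d0%:R / 2 * eta ^+ 2.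
set c := eta * (1 + Num.sqrt d0%:R).
pose S k w := (1 - beta) *: muonM beta Cm1 (minibatch G) k w - gradf (X k w).
apply: (expectation_sum_le (b := fun k w => frob (S k w))) int_grad int_S _ => w.
have step k : f (X k.+1 w) <= f (X k w) - eta * frob (gradf (X k w))
    + c * frob (S k w) + q.
  by rewrite X_S; apply: polar_step_descent; rewrite ?subr_gt0 ?ltW.
have -> : L * d0%:R / 2 * K%:R * eta ^+ 2 = K%:R * q by rewrite /q; ring.
have := sum_descent_telescope K step; rewrite X_0.
by have := f_ge (X K w); lra.
Qed.
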